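(* If an $n$-Brinkhuis triple pair exists, then $s\ge 2^{1/(n-1)}$.
   Context: Let $\Sigma=\{0,1,2\}$. A word over $\Sigma$ is square-free if it cannot be written as $xyyz$ with $y$ nonempty. $\mathcal{A}(n)$ is the set of square-free words of length $n$ over $\Sigma$, $a(n)=|\mathcal{A}(n)|$, and $s=\lim_{n\to\infty}a(n)^{1/n}$ (this limit exists). An $n$-Brinkhuis triple pair consists of three sets $\mathcal{B}^{(0)},\mathcal{B}^{(1)},\mathcal{B}^{(2)}\subset\mathcal{A}(n)$. Each $\mathcal{B}^{(i)}=\{U^{(i)},V^{(i)}\}$ has two distinct square-free words of length $n$. The defining condition: for every square-free word $w_1w_2w_3\in\mathcal{A}(3)$ and every choice $W_j\in\mathcal{B}^{(w_j)}$ for $j=1,2,3$, the concatenation $W_1W_2W_3$ (of length $3n$) is square-free. *)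

From HB Require Import structures.
From mathcomp Require Import all_boot all_order all_algebra.
From mathcomp Require Import all_classical all_reals all_analysis.
Set Implicit Arguments. Unset Strict Implicit. Unset Printing Implicit Defensive.

Definition word := seq 'I_3.

Definition squarefree (w : word) : Prop :=
  ~ exists x y z : word, y <> [::] /\ w = x ++ y ++ y ++ z.

Definition sqfree_count (n : nat) : nat :=
  #|[set w : n.-tuple 'I_3 | `[< squarefree (tval w) >]]|.

(* An n-Brinkhuis triple pair: B i = (U^(i), V^(i)). *)
Definition brinkhuis_triple_pair (n : nat) (B : 'I_3 -> word * word) : Prop :=
  (forall i : 'I_3,
      size (B i).1 = n /\ size (B i).2 = n /\
      squarefree (B i).1 /\ squarefree (B i).2 /\ (B i).1 <> (B i).2) /\
  (forall w1 w2 w3 : 'I_3, squarefree [:: w1; w2; w3] ->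
     forall W1 W2 W3 : word,
       (W1 = (B w1).1 \/ W1 = (B w1).2) ->
       (W2 = (B w2).1 \/ W2 = (B w2).2) ->
       (W3 = (B w3).1 \/ W3 = (B w3).2) ->
       squarefree (W1 ++ W2 ++ W3)).

From HB Require Import structures.
From mathcomp Require Import all_boot all_order all_algebra.
From mathcomp Require Import all_classical all_reals all_analysis.
From mathcomp Require Import zify.

(** Replacing each letter [a] of a square-free word [w] of length [m] by one of
    the two blocks of [B^(a)] gives [2^m] distinct words of length [m n], and
    they are square-free: a block cannot occur at a position that is not a
    multiple of [n] (it would form a square with a neighbouring block), so a
    long square has length [t n]; it then forces [w_k = w_(k+t)] along its
    first half, which yields a square either in [w] or in the image of the
    three-letter square-free word [w_0 w_t w_(2t)].  Hence
    [a(m n) >= 2^m a(m)], i.e. [2 a(m)^(1/m) <= (a(m n)^(1/(m n)))^n], and in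
    the limit [2 s <= s^n] with [s >= 1], that is [s^(n-1) >= 2]. *)

Set Implicit Arguments. Unset Strict Implicit. Unset Printing Implicit Defensive.

Lemma nth_cat_size_add (T : Type) (x0 : T) (s t : seq T) k :
  nth x0 (s ++ t) (size s + k) = nth x0 t k.
Proof. by rewrite nth_cat ltnNge leq_addr addKn. Qed.

Definition has_square_at (w : word) (i L : nat) : Prop :=
  [/\ 0 < L, i + 2 * L <= size w &
      forall k, k < L -> nth ord0 w (i + k) = nth ord0 w (i + L + k)].

Lemma squarefreeP (w : word) : squarefree w <-> ~ exists i L, has_square_at w i L.
Proof.
split=> [sqf [i [L [L0 iL sq]]] | sqf [x [y [z [yn e]]]]]; apply: sqf.
- have sz_x : size (take i w) = i by rewrite size_takel //; lia.
  have sz_y : size (take L (drop i w)) = L by rewrite size_takel // size_drop; lia.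
  exists (take i w), (take L (drop i w)), (drop (i + 2 * L) w); split.
    by move=> y0; move: sz_y; rewrite y0 /=; lia.
  apply: (@eq_from_nth _ ord0) => [|k _]; first by rewrite !size_cat sz_x sz_y !size_drop; lia.
  rewrite !nth_cat sz_x sz_y.
  case: (ltnP k i) => ki; first by rewrite nth_take.
  case: (ltnP (k - i) L) => kiL; first by rewrite nth_take // nth_drop; congr nth; lia.
  case: (ltnP (k - i - L) L) => kiL2; last by rewrite nth_drop; congr nth; lia.
  by rewrite nth_take // nth_drop sq //; congr nth; lia.
- exists (size x), (size y); rewrite e; split; first by case: y yn {e}.
    by rewrite !size_cat; lia.
  by move=> k ky; rewrite -addnA !nth_cat_size_add !nth_cat ky.
Qed.

Lemma has_square_at_catr (x y : word) i L :
  size x <= i -> has_square_at (x ++ y) i L -> has_square_at y (i - size x) L.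
Proof.
move=> xi [L0 iL sq]; split => //; first by move: iL; rewrite size_cat; lia.
move=> k kL; have := sq k kL.
by rewrite -{1 2}(subnKC xi) -!addnA !nth_cat_size_add addnA.
Qed.

Lemma has_square_at_catl (x y : word) i L :
  i + 2 * L <= size x -> has_square_at (x ++ y) i L -> has_square_at x i L.
Proof.
move=> iL [L0 _ sq]; split => // k kL.
by have := sq k kL; rewrite !nth_cat !ifT //; lia.
Qed.

Lemma has_square_at_cat_overlap (x y : word) d L :
  0 < L -> d + L = size x -> L <= size y ->
  (forall k, k < L -> nth ord0 x (d + k) = nth ord0 y k) ->
  has_square_at (x ++ y) d L.
Proof.
move=> L0 dL Ly ov; split=> //; first by rewrite size_cat; lia.
by move=> k kL; rewrite nth_cat ifT ?dL ?nth_cat_size_add ?ov //; lia.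
Qed.

Lemma squarefree_infix (x y z : word) : squarefree (x ++ y ++ z) -> squarefree y.
Proof.
move=> sqf [a [b [c [b0 e]]]]; apply: sqf.
by exists (x ++ a), b, (c ++ z); rewrite e -!catA.
Qed.

Lemma squarefree_catl (x y : word) : squarefree (x ++ y) -> squarefree x.
Proof. exact: (@squarefree_infix [::] x y). Qed.

Lemma squarefree_catr (x y : word) : squarefree (x ++ y) -> squarefree y.
Proof. by move=> sqf; apply: (@squarefree_infix x y [::]); rewrite cats0. Qed.

Lemma squarefree_nth_neq (w : word) j :
  squarefree w -> j.+1 < size w -> nth ord0 w j != nth ord0 w j.+1.
Proof.
move=> /squarefreeP sqf jw; apply/eqP => wj; apply: sqf.
by exists j, 1; split=> [||[|]//]; rewrite ?addn0 ?addn1 //; lia.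
Qed.

Lemma squarefree1 (a : 'I_3) : squarefree [:: a].
Proof. by apply/squarefreeP => -[i [L [L0 /= iL _]]]; lia. Qed.

Lemma squarefree3 (a b c : 'I_3) : a != b -> b != c -> squarefree [:: a; b; c].
Proof.
move=> ab bc; apply/squarefreeP => -[i [L [L0 /= iL /(_ 0 L0)]]].
have -> : L = 1 by lia.
by case: i iL => [|[|i]] //= iL; rewrite ?addn0 => e; [move: ab | move: bc | lia];
  rewrite e eqxx.
Qed.

Definition block_of (B : 'I_3 -> word * word) (a : 'I_3) (X : word) : Prop :=
  X = (B a).1 \/ X = (B a).2.

Section BrinkhuisBlocks.
Variables (n : nat) (B : 'I_3 -> word * word).
Hypothesis HB : brinkhuis_triple_pair n B.

Lemma size_block_of a X : block_of B a X -> size X = n.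
Proof. by case: HB => HB1 _ [->|->]; case: (HB1 a) => [? [? _]]. Qed.

Lemma squarefree_block_of a X : block_of B a X -> squarefree X.
Proof. by case: HB => HB1 _ [->|->]; case: (HB1 a) => [? [? [? [? _]]]]. Qed.

Lemma brinkhuis_n_gt0 : 0 < n.
Proof.
case: HB => /(_ ord0) [sz1 [sz2 [_ [_ neq]]]] _.
by case: n sz1 sz2 neq => // /size0nil -> /size0nil -> [].
Qed.

Lemma squarefree_block_of3 a b c X Y Z : a != b -> b != c ->
  block_of B a X -> block_of B b Y -> block_of B c Z -> squarefree (X ++ Y ++ Z).
Proof. by case: HB => _ HB2 ab bc; apply/HB2/squarefree3. Qed.

Lemma squarefree_block_of2 a b X Y : a != b ->
  block_of B a X -> block_of B b Y -> squarefree (X ++ Y).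
Proof.
move=> ab bX bY; have [c bc] : exists c : 'I_3, b != c.
  by have [->|b0] := eqVneq b ord0; [exists ord_max | exists ord0].
by apply: (@squarefree_catl _ (B c).1); rewrite -catA;
  apply: (squarefree_block_of3 ab bc bX bY); left.
Qed.

Lemma block_of_inj a b X : block_of B a X -> block_of B b X -> a = b.
Proof.
move=> aX bX; apply/eqP/negP => /negP ab.
apply: (squarefree_block_of2 ab aX bX); exists [::], X, [::]; split; last by rewrite cats0.
by move=> X0; have := size_block_of aX; rewrite X0 /=; have := brinkhuis_n_gt0; lia.
Qed.

End BrinkhuisBlocks.

Lemma size_flatten_uniform (T : eqType) n (ss : seq (seq T)) :
  {in ss, forall s, size s = n} -> size (flatten ss) = size ss * n.
Proof.
elim: ss => [|s ss IH] //= sz; rewrite size_cat sz ?mem_head // IH // => s' s's.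
by apply: sz; rewrite in_cons s's orbT.
Qed.

Lemma nth_flatten_uniform (T : eqType) (x0 : T) n (ss : seq (seq T)) k e :
  {in ss, forall s, size s = n} -> k < size ss -> e < n ->
  nth x0 (flatten ss) (k * n + e) = nth x0 (nth [::] ss k) e.
Proof.
elim: ss k => [|s ss IH] [|k] //= sz ks en.
  by rewrite mul0n add0n nth_cat sz ?mem_head ?en.
rewrite nth_cat sz ?mem_head // ifF; last lia.
have -> : k.+1 * n + e - n = k * n + e by lia.
by rewrite IH // => s' s's; apply: sz; rewrite in_cons s's orbT.
Qed.

Section BlockSubstitution.
Variables (n : nat) (B : 'I_3 -> word * word).
Hypothesis HB : brinkhuis_triple_pair n B.
Variables (w : word) (Xs : seq word).
Hypothesis size_Xs : size Xs = size w.
Hypothesis block_Xs :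
  forall j, j < size w -> block_of B (nth ord0 w j) (nth [::] Xs j).
Hypothesis squarefree_w : squarefree w.

Local Notation W := (flatten Xs).

Lemma size_blocks : {in Xs, forall X, size X = n}.
Proof.
move=> X XXs; rewrite -(nth_index [::] XXs).
by apply/(size_block_of HB)/block_Xs; rewrite -size_Xs index_mem.
Qed.

Lemma size_W : size W = size w * n.
Proof. by rewrite (size_flatten_uniform size_blocks) size_Xs. Qed.

Lemma nth_W k e : k < size w -> e < n ->
  nth ord0 W (k * n + e) = nth ord0 (nth [::] Xs k) e.
Proof. by move=> kw; apply: nth_flatten_uniform size_blocks _; rewrite size_Xs. Qed.

(* A misaligned block overlaps two consecutive blocks and forms a square with
   the one whose letter differs from its own. *)
Lemma block_occurrence_aligned a X p : block_of B a X -> p + n <= size W ->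
  (forall e, e < n -> nth ord0 W (p + e) = nth ord0 X e) -> n %| p.
Proof.
move=> aX; rewrite size_W => pW occ.
have rn : p %% n < n by rewrite ltn_mod (brinkhuis_n_gt0 HB).
rewrite /dvdn; move: (p %/ n) (p %% n) (divn_eq p n) rn => g r p_eq rn.
rewrite eqn0Ngt; apply/negP => r0.
have gw : g.+1 < size w.
  by rewrite -(ltn_pmul2r (brinkhuis_n_gt0 HB)) mulSn; lia.
have [Xg Xg1] := (block_Xs (ltnW gw), block_Xs gw).
have [[sX sXg] sXg1] := (size_block_of HB aX, size_block_of HB Xg, size_block_of HB Xg1).
have [ag|ag] := eqVneq a (nth ord0 w g).
- have ag1 : a != nth ord0 w g.+1 by rewrite ag squarefree_nth_neq.
  have /squarefreeP := squarefree_block_of2 HB ag1 aX Xg1; apply; exists (n - r), r.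
  apply: has_square_at_cat_overlap; rewrite ?sX ?sXg1; try lia.
  move=> k kr; rewrite -occ; last lia.
  by rewrite -nth_W ?p_eq; [congr nth | |]; lia.
- rewrite eq_sym in ag.
  have /squarefreeP := squarefree_block_of2 HB ag Xg aX; apply; exists r, (n - r).
  apply: has_square_at_cat_overlap; rewrite ?sX ?sXg; try lia.
  by move=> k kr; rewrite -nth_W -?occ ?p_eq ?addnA //; lia.
Qed.

Lemma squarefree_flatten_take3 : squarefree (flatten (take 3 Xs)).
Proof.
have adj j : j.+1 < size w -> nth ord0 w j != nth ord0 w j.+1.
  exact: squarefree_nth_neq.
move: block_Xs adj; rewrite -size_Xs.
case: Xs => [|X0 [|X1 [|X2 Ys]]] bX adj /=; rewrite ?take0 /= ?cats0.
- by apply/squarefreeP => -[i [L [L0 /= iL _]]]; lia.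
- apply: (squarefree_block_of HB); exact: (bX 0 isT).
- by apply: (squarefree_block_of2 HB (adj 0 isT)); [apply: (bX 0) | apply: (bX 1)].
- by apply: (squarefree_block_of3 HB (adj 0 isT) (adj 1 isT));
    [apply: (bX 0) | apply: (bX 1) | apply: (bX 2)].
Qed.

Lemma no_square_in_three_blocks i L :
  i + 2 * L <= 3 * n -> ~ has_square_at W i L.
Proof.
move=> iL sq; have [_ iW _] := sq; rewrite size_W in iW.
have /squarefreeP := squarefree_flatten_take3; apply; exists i, L.
move: sq; rewrite -{1}(cat_take_drop 3 Xs) flatten_cat; apply: has_square_at_catl.
rewrite (@size_flatten_uniform _ n) => [|X /mem_take]; last exact: size_blocks.
rewrite size_take_min size_Xs; nia.
Qed.

(* Block 1 lies in the first half of the square or block 2 in the second; its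
   copy in the other half is a block occurrence, hence aligned. *)
Lemma long_square_length_dvd i L : i < n -> 3 * n < i + 2 * L ->
  has_square_at W i L -> n %| L.
Proof.
move=> iN iL [L0 iW sq]; have iwn := iW; rewrite size_W in iwn.
have w3 : 3 < size w by rewrite -(ltn_pmul2r (brinkhuis_n_gt0 HB)); lia.
have [ni | in2] := leqP (2 * n) (i + L).
- rewrite -(dvdn_addr L (dvdnn n)).
  apply: (block_occurrence_aligned (block_Xs (_ : 1 < size w))); [lia | lia |].
  move=> e en; rewrite -nth_W ?mul1n; [|lia|lia].
  rewrite (_ : n + L + e = i + L + (n + e - i)); last lia.
  by rewrite -sq; [congr nth | ]; lia.
- rewrite (_ : L = 2 * n - (2 * n - L)); last lia.
  apply: dvdn_sub; first by rewrite dvdn_mull.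
  apply: (block_occurrence_aligned (block_Xs (_ : 2 < size w))); [lia | lia |].
  move=> e en; rewrite -nth_W; [|lia|lia].
  rewrite (_ : 2 * n + e = i + L + (2 * n - L + e - i)); last lia.
  by rewrite -sq; [congr nth | ]; lia.
Qed.

Lemma letter_eq_of_blocks k k' : k < size w -> k' < size w ->
  (forall e, e < n -> nth ord0 W (k * n + e) = nth ord0 W (k' * n + e)) ->
  nth ord0 w k = nth ord0 w k'.
Proof.
move=> kw kw' eqW; apply: (block_of_inj HB (block_Xs kw)).
suff -> : nth [::] Xs k = nth [::] Xs k' by apply: block_Xs.
have [sXk sXk'] := (size_block_of HB (block_Xs kw), size_block_of HB (block_Xs kw')).
apply: (@eq_from_nth _ ord0) => [|e]; rewrite sXk ?sXk' // => en.
by rewrite -!nth_W ?eqW.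
Qed.

Lemma square_shift_letter i t k : has_square_at W i (t * n) ->
  i <= k * n -> k.+1 * n <= i + t * n -> nth ord0 w k = nth ord0 w (k + t).
Proof.
move=> [_ iW sq] ik kt; rewrite size_W in iW.
have ktw : k + t < size w.
  rewrite -(ltn_pmul2r (brinkhuis_n_gt0 HB)) mulnDl; move: kt (brinkhuis_n_gt0 HB).
  by rewrite mulSn; lia.
apply: letter_eq_of_blocks => // [|e en]; first lia.
rewrite (_ : k * n + e = i + (k * n + e - i)); last lia.
by rewrite sq; [congr nth; rewrite mulnDl | move: kt; rewrite mulSn]; lia.
Qed.

Lemma square_across_three_blocks i t : 0 < i < n -> has_square_at W i (t * n) ->
  has_square_at (nth [::] Xs 0 ++ nth [::] Xs t ++ nth [::] Xs (t + t)) i n.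
Proof.
move=> /andP[i0 iN] [t0 iW sq]; rewrite size_W in iW.
have ntn : n <= t * n by rewrite leq_pmull //; move: t0; rewrite muln_gt0 => /andP[].
have tt_w : t + t < size w.
  by rewrite -(ltn_pmul2r (brinkhuis_n_gt0 HB)) mulnDl; lia.
have [w0 tw] : 0 < size w /\ t < size w by lia.
have [[sX0 sXt] sX2t] := (size_block_of HB (block_Xs w0),
  size_block_of HB (block_Xs tw), size_block_of HB (block_Xs tt_w)).
split; [lia | rewrite !size_cat; lia | move=> k kn].
rewrite (_ : i + n + k = n + (i + k)); last lia.
rewrite -{1}sX0 nth_cat_size_add.
have [ikn | nik] := ltnP (i + k) n.
- rewrite nth_cat sX0 ikn nth_cat sXt ikn -!nth_W ?mul0n ?add0n; try lia.
  by rewrite (_ : t * n + (i + k) = i + t * n + k) ?sq //; lia.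
- have [e ike] : exists e, i + k = n + e by exists (i + k - n); lia.
  rewrite ike -{1}sX0 nth_cat_size_add nth_cat sXt ifT; last lia.
  rewrite -{1}sXt nth_cat_size_add -!nth_W; try lia.
  rewrite (_ : t * n + e = i + (t * n + e - i)) ?sq; try lia.
  by congr nth; rewrite mulnDl; lia.
Qed.

Lemma no_square_at_short_offset i L : i < n -> ~ has_square_at W i L.
Proof.
move=> iN sq; have [iL | iL] := leqP (i + 2 * L) (3 * n).
  exact: no_square_in_three_blocks iL sq.
have /dvdnP [t Lt] := long_square_length_dvd iN iL sq; rewrite {L}Lt in sq iL.
have [t0 iW _] := sq; rewrite size_W in iW.
have n0 := brinkhuis_n_gt0 HB; have t_gt0 : 0 < t by move: t0; rewrite muln_gt0 => /andP[].
have shift k : 0 < k < t -> nth ord0 w k = nth ord0 w (k + t).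
  move=> /andP[k0 kt]; apply: (square_shift_letter sq); nia.
have /squarefreeP := squarefree_w; apply.
have [i0 | i0] := posnP i.
  exists 0, t; split=> [//||k kt]; first by rewrite -(leq_pmul2r n0); lia.
  by rewrite add0n addnC; apply: (square_shift_letter sq); nia.
have tt_w : t + t < size w by rewrite -(ltn_pmul2r n0) mulnDl; lia.
have [e0 | n0t] := eqVneq (nth ord0 w 0) (nth ord0 w t).
  exists 0, t; split=> [//||[|k] kt]; [lia | by rewrite !add0n !addn0 |].
  by rewrite !add0n addnC shift.
have [et | ntt] := eqVneq (nth ord0 w t) (nth ord0 w (t + t)).
  exists 1, t; split=> [//||k kt]; first lia.
  have [kt1 | | tk] := ltngtP (1 + k) t; last by rewrite tk et; congr nth; lia.
    by rewrite shift; [rewrite addnAC | apply/andP; split; lia].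
  lia.
exfalso; have [w0 tw] : 0 < size w /\ t < size w by lia.
have /squarefreeP := squarefree_block_of3 HB n0t ntt (block_Xs w0) (block_Xs tw) (block_Xs tt_w).
by apply; exists i, n; apply: square_across_three_blocks; rewrite ?i0.
Qed.

End BlockSubstitution.

Lemma squarefree_flatten_blocks n B (w : word) (Xs : seq word) :
  brinkhuis_triple_pair n B -> size Xs = size w ->
  (forall j, j < size w -> block_of B (nth ord0 w j) (nth [::] Xs j)) ->
  squarefree w -> squarefree (flatten Xs).
Proof.
move=> HB sXs bXs sqf_w; apply/squarefreeP => -[i [L sq]].
have n0 := brinkhuis_n_gt0 HB; have [L0 iW _] := sq; rewrite (size_W HB sXs bXs) in iW.
have jw : i %/ n < size w by rewrite ltn_divLR //; lia.
have sz_take : size (flatten (take (i %/ n) Xs)) = i %/ n * n.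
  rewrite (@size_flatten_uniform _ n) => [|X /mem_take]; last exact: (size_blocks HB sXs bXs).
  by rewrite size_takel // sXs ltnW.
move: sq; rewrite -(cat_take_drop (i %/ n) Xs) flatten_cat.
move=> /has_square_at_catr; rewrite sz_take => /(_ (leq_trunc_div i n)).
apply: (no_square_at_short_offset HB (w := drop (i %/ n) w)).
- by rewrite !size_drop sXs.
- by move=> j; rewrite size_drop !nth_drop => jw'; apply: bXs; lia.
- by apply: (@squarefree_catr (take (i %/ n) w)); rewrite cat_take_drop.
- by rewrite {1}(divn_eq i n) addKn ltn_mod.
Qed.

Definition pick_block (B : 'I_3 -> word * word) (x : 'I_3 * bool) : word :=
  if x.2 then (B x.1).1 else (B x.1).2.

Definition substitute (B : 'I_3 -> word * word) (w : word) (c : seq bool) : word :=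
  flatten [seq pick_block B x | x <- zip w c].

Lemma block_of_pick_block B x : block_of B x.1 (pick_block B x).
Proof. by rewrite /pick_block /block_of; case: x.2; [left | right]. Qed.

Section Substitution.
Variables (n : nat) (B : 'I_3 -> word * word).
Hypothesis HB : brinkhuis_triple_pair n B.

Lemma pick_block_inj : injective (pick_block B).
Proof.
move=> [a b] [a' b'] e.
have aa' : a = a'.
  by apply: (block_of_inj HB (block_of_pick_block B (a, b))); rewrite e;
    apply: (block_of_pick_block B (a', b')).
subst a'.
have [HB1 _] := HB; have [_ [_ [_ [_ neq]]]] := HB1 a.
by move: e; rewrite /pick_block /=; case: b; case: b' => // e; case: neq.
Qed.

Lemma shape_pick_block s : shape [seq pick_block B x | x <- s] = nseq (size s) n.
Proof.
by elim: s => //= x s ->; rewrite (size_block_of HB (block_of_pick_block B x)).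
Qed.

Lemma size_substitute w c : size c = size w -> size (substitute B w c) = size w * n.
Proof. by move=> sc; rewrite size_flatten shape_pick_block sumn_nseq size_zip sc minnn mulnC. Qed.

Lemma squarefree_substitute w c :
  size c = size w -> squarefree w -> squarefree (substitute B w c).
Proof.
move=> sc; apply: squarefree_flatten_blocks HB _ _ => [|j jw].
  by rewrite size_map size_zip sc minnn.
rewrite (nth_map (ord0, false)) ?size_zip ?sc ?minnn // nth_zip //.
exact: (block_of_pick_block B (nth ord0 w j, nth false c j)).
Qed.

Lemma substitute_inj w w' c c' : size c = size w -> size c' = size w' ->
  size w = size w' -> substitute B w c = substitute B w' c' -> w = w' /\ c = c'.
Proof.
move=> sc sc' sw /eq_from_flatten_shape; rewrite !shape_pick_block !size_zip sc sc' sw.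
move=> /(_ erefl) /(inj_map pick_block_inj) wc.
split; first by rewrite -(unzip1_zip (eq_leq (esym sc))) wc unzip1_zip // sc'.
by rewrite -(unzip2_zip (eq_leq sc)) wc unzip2_zip // sc'.
Qed.

Lemma sqfree_count_mul_ge m : 2 ^ m * sqfree_count m <= sqfree_count (m * n).
Proof.
pose S := [set t : m.-tuple 'I_3 | `[< squarefree (tval t) >]].
pose F (p : m.-tuple 'I_3 * m.-tuple bool) : (m * n).-tuple 'I_3 :=
  insubd (nseq_tuple (m * n) (ord0 : 'I_3)) (substitute B p.1 p.2).
have valF p : val (F p) = substitute B p.1 p.2.
  by rewrite /F val_insubd size_substitute ?size_tuple ?eqxx.
have -> : 2 ^ m * #|S| = #|F @: finset.setX S [set: m.-tuple bool]|.
  rewrite card_in_imset; first by rewrite cardsX cardsT card_tuple card_bool mulnC.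
  move=> [w c] [w' c'] _ _ /(congr1 val); rewrite !valF /= => wc.
  have [] := substitute_inj _ _ _ wc; rewrite ?size_tuple //.
  by move=> /val_inj -> /val_inj ->.
apply/subset_leq_card/fintype.subsetP => _ /imsetP [[w c] /finset.setXP [wS _] ->].
rewrite inE; apply/asboolP; rewrite valF /=.
apply: squarefree_substitute; first by rewrite !size_tuple.
by move: wS; rewrite inE => /asboolP.
Qed.

Lemma brinkhuis_n_gt1 : 1 < n.
Proof.
rewrite ltn_neqAle (brinkhuis_n_gt0 HB) andbT; apply/eqP => n1.
pose g x := nth ord0 (pick_block B x) 0.
have pick_g x : pick_block B x = [:: g x].
  rewrite /g; have := size_block_of HB (block_of_pick_block B x); rewrite -n1.
  by case: (pick_block B x) => [|y []].
have /leq_card : injective g by move=> x y gxy; apply: pick_block_inj; rewrite !pick_g gxy.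
by rewrite card_prod card_ord card_bool.
Qed.

End Substitution.

Lemma sqfree_count_gt0_le k k' :
  k' <= k -> 0 < sqfree_count k -> 0 < sqfree_count k'.
Proof.
rewrite /sqfree_count !card_gt0 => k'k /set0Pn [t]; rewrite inE => /asboolP sqf_t.
apply/set0Pn; exists (insubd (nseq_tuple k' (ord0 : 'I_3)) (take k' t)).
rewrite inE; apply/asboolP; rewrite val_insubd size_takel ?size_tuple // eqxx.
by apply: (@squarefree_catl _ (drop k' t)); rewrite cat_take_drop.
Qed.

Lemma sqfree_count_gt0 n B m : brinkhuis_triple_pair n B -> 0 < sqfree_count m.
Proof.
move=> HB; have n1 := brinkhuis_n_gt1 HB.
have count_pow j : 0 < sqfree_count (n ^ j).
  elim: j => [|j IH].
    rewrite /sqfree_count card_gt0; apply/set0Pn; exists [tuple ord0].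
    by rewrite inE; apply/asboolP/squarefree1.
  rewrite expnSr; apply: leq_trans (sqfree_count_mul_ge HB _).
  by rewrite muln_gt0 expn_gt0 IH.
exact: sqfree_count_gt0_le (ltnW (ltn_expl m n1)) (count_pow m).
Qed.

Import Order.TTheory GRing.Theory Num.Theory.
Import numFieldNormedType.Exports.
Local Open Scope classical_set_scope.
Local Open Scope ring_scope.

Section RootGrowth.
Variable R : realType.

Lemma exprn_powR_invn (x : R) k : (0 < k)%N -> 0 <= x -> (x ^+ k) `^ (k%:R^-1) = x.
Proof.
by move=> k0 x0; rewrite -powR_mulrn // -powRrM mulfV ?pnatr_eq0 -?lt0n // powRr1.
Qed.

Lemma powR_invn_le (x s : R) k : (0 < k)%N -> 0 <= x -> 0 <= s ->
  x <= s ^+ k -> x `^ (k%:R^-1) <= s.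
Proof.
move=> k0 x0 s0 xs; rewrite -[leRHS](exprn_powR_invn k0 s0).
by apply: ge0_ler_powR; rewrite ?nnegrE ?invr_ge0 ?exprn_ge0.
Qed.

Lemma root_growth_le (m n a b : nat) : (0 < m)%N -> (0 < n)%N -> (2 ^ m * a <= b)%N ->
  2 * a%:R `^ (m%:R^-1) <= (b%:R `^ ((m * n)%:R^-1)) ^+ n :> R.
Proof.
move=> m0 n0 ab.
rewrite -powR_mulrn ?powR_ge0 // -powRrM natrM invfM -mulrA mulVf ?pnatr_eq0 -?lt0n //.
rewrite mulr1 -{1}[2](exprn_powR_invn (x := 2) m0) // -powRM ?exprn_ge0 //.
by apply: ge0_ler_powR; rewrite ?nnegrE ?invr_ge0 ?mulr_ge0 ?exprn_ge0 // -natrX -natrM ler_nat.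
Qed.

Lemma root_growth_limit_ge (a : nat -> nat) (n : nat) (s : R) :
  (1 < n)%N -> (forall m, 0 < a m)%N -> (forall m, 2 ^ m * a m <= a (m * n))%N ->
  (fun m : nat => (a m)%:R `^ (m%:R^-1)) @ \oo --> s ->
  2 `^ (((n - 1)%N)%:R^-1) <= s.
Proof.
move=> n1 a_gt0 a_growth; set u := (fun m : nat => _) => u_s.
have un_s : (fun m => u (m * n)%N) @ \oo --> s.
  apply: cvg_comp u_s; apply/cvgnyPge => M; exists M => // m /= Mm.
  by rewrite (leq_trans Mm) // leq_pmulr //; lia.
have s_ge1 : 1 <= s.
  apply: (@ler_cvg_to _ _ _ _ (fun=> 1) u 1 s (cvg_cst _) u_s); exists 1%N => // m /= _.
  apply: (@le_trans _ _ (1 `^ m%:R^-1)); first by rewrite powR1.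
  by rewrite ge0_ler_powR ?nnegrE ?invr_ge0 ?ler1n.
have two_s : 2 * s <= s ^+ n.
  have u2_s : (fun m => 2 * u m) @ \oo --> 2 * s by apply: cvgM => //; apply: cvg_cst.
  have unn_s : (fun m => u (m * n)%N ^+ n) @ \oo --> s ^+ n.
    apply: (@cvg_comp _ _ _ (fun m => u (m * n)%N) (fun x : R => x ^+ n) _ _ _ un_s).
    exact: exprn_continuous.
  apply: (ler_cvg_to u2_s unn_s).
  by exists 1%N => // m /= m0; apply: root_growth_le (a_growth m); lia.
have s_pow : 2 <= s ^+ (n - 1).
  rewrite -(ler_pM2r (lt_le_trans ltr01 s_ge1)) -exprSr.
  by rewrite (_ : (n - 1).+1 = n)%N //; lia.
by apply: powR_invn_le s_pow => //; [lia | exact: le_trans ler01 s_ge1].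
Qed.

End RootGrowth.

Theorem lemma1 (R : realType) (n : nat) (s : R) :
  (exists B : 'I_3 -> word * word, brinkhuis_triple_pair n B) ->
  (fun m : nat => (sqfree_count m)%:R `^ (m%:R^-1)) @ \oo --> s ->
  2 `^ (((n - 1)%N)%:R^-1) <= s.
Proof.
move=> [B HB]; apply: root_growth_limit_ge (brinkhuis_n_gt1 HB) _ (sqfree_count_mul_ge HB).
by move=> m; apply: sqfree_count_gt0 HB.
Qed.
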